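(* In the setting of the context, assume that $E_\varepsilon\to+\infty$ as $\varepsilon\to0^+$ and that there exists $\beta<2$ with $E_\varepsilon=O(\varepsilon^{-\beta})$ as $\varepsilon\to0^+$. Then the maximal solution $\varepsilon(t)$ of $\varepsilon'(t)=\varepsilon_0'\sqrt{\dfrac{m_s+m_f(\varepsilon^* )}{m_s+m_f(\varepsilon(t))}}$, $\varepsilon(0)=\varepsilon^*$, reaches $0$ in finite time with null velocity: there is $T<\infty$ with $\varepsilon(t)>0$ on $[0,T)$, $\varepsilon(t)\to0$ and $\varepsilon'(t)\to0$ as $t\to T^-$.
   Context: Notation: $e_2=(0,1)$. Geometry: $\mathsf C\subset\mathbb R^2$ is a smooth bounded connected open set, symmetric with respect to $\{\xi_1=0\}$, with $0\in\partial\mathsf C$, such that near the origin $\partial\mathsf C$ is a segment of $\{\xi_2=0\}$ with $\mathsf C$ locally above it. $S_0$ is compact, connected, symmetric with respect to $\{\xi_1=0\}$, and $\varepsilon^*>0$ is such that $S_\varepsilon:=S_0+\varepsilon e_2\subset\mathsf C$ for $0<\varepsilon\le\varepsilon^*$. For $0<\varepsilon\le\varepsilon^*$, $\varphi(\varepsilon,\cdot)\in H^1(\mathsf C\setminus S_\varepsilon)$ solves $\Delta\varphi=0$ in $\mathsf C\setminus S_\varepsilon$, $\partial_n\varphi=n_2$ on $\partial S_\varepsilon$, $\partial_n\varphi=0$ on $\partial\mathsf C$ ($n=(n_1,n_2)$ the unit normal pointing out of the fluid domain). The Dirichlet energy is $E_\varepsilon=\int_{\mathsf C\setminus S_\varepsilon}|\nabla\varphi(\varepsilon,\cdot)|^2$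 and the added mass is $m_f(\varepsilon)=\varrho_f E_\varepsilon$ with $\varrho_f>0$; $m_s>0$ and $\varepsilon_0'<0$ are given constants. *)

From Stdlib Require Import Reals.
From Coquelicot Require Import Coquelicot.
Open Scope R_scope.

Definition added_mass (rhof : R) (E : R -> R) (x : R) : R := rhof * E x.

Definition ode_rhs (ms rhof v0 estar : R) (E : R -> R) (x : R) : R :=
  v0 * sqrt ((ms + added_mass rhof E estar) / (ms + added_mass rhof E x)).

Definition is_solution (ms rhof v0 estar : R) (E : R -> R)
    (eps : R -> R) (T : R) : Prop :=
  0 < T /\
  eps 0 = estar /\
  (forall t, 0 <= t < T -> 0 < eps t <= estar) /\
  filterlim eps (at_right 0) (locally estar) /\
  (forall t, 0 < t < T -> is_derive eps t (ode_rhs ms rhof v0 estar E (eps t))).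

From Stdlib Require Import Reals Lra ClassicalEpsilon.
From Coquelicot Require Import Coquelicot.
Open Scope R_scope.

(* Separating variables, the solution reaches the position x at the time
   G(x) = \int_x^{estar} dy / |eps'(y)|, whose integrand
   sqrt((m_s + m_f(y)) / (m_s + m_f(estar))) / |eps_0'| is O(y^(-beta/2)) by the
   bound E = O(eps^(-beta)); since beta < 2 it is integrable at 0, so the
   contact time T = sup G is finite.  The solution is the inverse of the strictly
   decreasing G on [0, T), every solution satisfies G(eps(t)) = t (hence is
   unique and lives on [0, T)), and the velocity tends to 0 because m_f(eps)
   blows up as eps -> 0. *)

Lemma filter_le_within_within (x : R) (D D' : R -> Prop) :
  locally x (fun s => D' s -> D s) ->
  filter_le (within D' (locally x)) (within D (locally x)).
Proof.
intros HD P HP. unfold within in *.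
generalize (filter_and _ _ HD HP). apply filter_imp. tauto.
Qed.

Lemma filter_le_locally_within (x : R) (D : R -> Prop) :
  locally x D -> filter_le (locally x) (within D (locally x)).
Proof.
intros HD P HP. generalize (filter_and _ _ HD HP). apply filter_imp. tauto.
Qed.

Lemma continuous_Rmin_l (e y : R) : continuous (fun z => Rmin z e) y.
Proof.
intros P [eps HP]. exists eps. intros z Hz. apply HP.
change (Rabs (Rmin z e - Rmin y e) < eps). change (Rabs (z - y) < eps) in Hz.
unfold Rmin in *. destruct (Rle_dec z e), (Rle_dec y e); unfold Rabs in *;
  repeat destruct Rcase_abs; lra.
Qed.

(* The difference quotient of [F] at [t] is the reciprocal of that of [G]
   between [F t] and [F (t + h)], and [F (t + h) <> F t] since [G (F s) = s]. *)
Lemma is_derive_inverse (G F : R -> R) (t d : R) :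
  d <> 0 -> is_derive G (F t) d -> locally t (fun s => G (F s) = s) ->
  continuous F t -> is_derive F t (/ d).
Proof.
intros Hd HG [d0 HGF] HF.
apply is_derive_Reals in HG. apply is_derive_Reals.
intros eps Heps.
assert (Had : 0 < Rabs d) by (apply Rabs_pos_lt; auto).
set (e1 := Rmin (Rabs d / 2) (eps * (Rabs d * Rabs d) / 2)).
assert (He1 : 0 < e1).
{ apply Rmin_glb_lt; [lra|]. assert (0 < eps * (Rabs d * Rabs d)) by (apply Rmult_lt_0_compat; nra). lra. }
destruct (HG e1 He1) as [d1 Hd1].
destruct (HF _ (locally_ball (F t) d1)) as [d2 Hd2].
assert (Hdd : 0 < Rmin d0 d2) by (apply Rmin_glb_lt; apply cond_pos).
exists (mkposreal _ Hdd). intros h Hh0 Hh. simpl in Hh.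
assert (Hh1 : Rabs h < d0) by (eapply Rlt_le_trans; [exact Hh|apply Rmin_l]).
assert (Hh2 : Rabs h < d2) by (eapply Rlt_le_trans; [exact Hh|apply Rmin_r]).
assert (HGt : G (F t) = t).
{ apply HGF. apply ball_center. }
assert (HGth : G (F (t + h)) = t + h).
{ apply HGF. change (Rabs (t + h - t) < d0). now replace (t + h - t) with h by ring. }
set (k := F (t + h) - F t).
assert (Hk0 : k <> 0).
{ intros Hk. assert (F (t + h) = F t) as Heq by (unfold k in Hk; lra).
  rewrite Heq in HGth. lra. }
assert (Hk1 : Rabs k < d1).
{ apply (Hd2 (t + h)). change (Rabs (t + h - t) < d2). now replace (t + h - t) with h by ring. }
specialize (Hd1 k Hk0 Hk1).
replace (F t + k) with (F (t + h)) in Hd1 by (unfold k; ring).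
rewrite HGth, HGt in Hd1. replace (t + h - t) with h in Hd1 by ring.
fold k. set (q := h / k) in Hd1.
assert (Hq0 : q <> 0) by (unfold q, Rdiv; apply Rmult_integral_contrapositive; split; auto; apply Rinv_neq_0_compat; auto).
replace (k / h - / d) with ((d - q) / (q * d)) by (unfold q; field; auto).
rewrite Rabs_div, Rabs_mult by (apply Rmult_integral_contrapositive; auto).
rewrite Rabs_minus_sym in Hd1.
assert (Haq : Rabs d / 2 <= Rabs q).
{ assert (e1 <= Rabs d / 2) by apply Rmin_l.
  assert (Rabs d - Rabs q <= Rabs (d - q)) by apply Rabs_triang_inv. lra. }
assert (HP : 0 < Rabs q * Rabs d) by (apply Rmult_lt_0_compat; lra).
apply Rmult_lt_reg_r with (Rabs q * Rabs d); auto.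
unfold Rdiv. rewrite Rmult_assoc, Rinv_l, Rmult_1_r by lra.
assert (e1 <= eps * (Rabs d * Rabs d) / 2) by apply Rmin_r.
nra.
Qed.

Lemma is_derive_0_at_right_lim (h : R -> R) (a b l : R) :
  (forall s, a < s < b -> is_derive h s 0) -> filterlim h (at_right a) (locally l) ->
  forall s, a < s < b -> h s = l.
Proof.
intros Hd Hl s Hs.
assert (Hconst : forall r, a < r <= s -> h r = h s).
{ intros r Hr. destruct (Req_dec r s) as [->|Hrs]; [reflexivity|].
  destruct (MVT_gen h r s (fun _ => 0)) as [c [_ Hc]].
  - rewrite Rmin_left, Rmax_right by lra. intros x Hx. apply Hd. lra.
  - rewrite Rmin_left, Rmax_right by lra. intros x Hx. apply continuity_pt_filterlim.
    apply (@ex_derive_continuous R_AbsRing R_NormedModule). eexists. apply Hd. lra.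
  - lra. }
apply (filterlim_locally_unique (F := at_right a) (fun _ => h s)).
- apply filterlim_const.
- apply (filterlim_ext_loc h); [|exact Hl].
  exists (mkposreal (s - a) ltac:(lra)). intros r Hr Har.
  apply Hconst. split; [lra|]. apply Rabs_lt_between' in Hr. simpl in Hr. lra.
Qed.

Lemma continuous_Rpower_l (a y : R) : 0 < y -> continuous (fun x => Rpower x a) y.
Proof.
intros Hy. apply (@ex_derive_continuous R_AbsRing R_NormedModule).
eexists. apply is_derive_Reals, derivable_pt_lim_power, Hy.
Qed.

Lemma RInt_Rpower_le (gamma x d : R) : 0 <= gamma < 1 -> 0 < x <= d ->
  RInt (fun y => Rpower y (- gamma)) x d <= / (1 - gamma) * Rpower d (1 - gamma).
Proof.
intros Hg Hxd.
set (H := fun y => / (1 - gamma) * Rpower y (1 - gamma)).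
assert (HH : forall y, 0 < y -> is_derive H y (Rpower y (- gamma))).
{ intros y Hy.
  replace (Rpower y (- gamma)) with (/ (1 - gamma) * ((1 - gamma) * Rpower y (1 - gamma - 1)))
    by (replace (1 - gamma - 1) with (- gamma) by ring; field; lra).
  apply is_derive_scal, is_derive_Reals, derivable_pt_lim_power, Hy. }
assert (Hint : RInt (fun y => Rpower y (- gamma)) x d = H d - H x).
{ apply is_RInt_unique, (is_RInt_derive H); rewrite Rmin_left, Rmax_right by lra; intros y Hy.
  - exact (HH y ltac:(lra)).
  - apply continuous_Rpower_l. lra. }
rewrite Hint. unfold H, Rpower.
assert (0 < / (1 - gamma) * exp ((1 - gamma) * ln x)); [|lra].
apply Rmult_lt_0_compat; [apply Rinv_0_lt_compat; lra|apply exp_pos].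
Qed.

Lemma decreasing_strict_sup (G : R -> R) :
  (forall x y, 0 < x -> x < y -> G y < G x) -> (exists B, forall x, 0 < x -> G x <= B) ->
  exists T, (forall x, 0 < x -> G x < T) /\ (forall t, t < T -> exists x, 0 < x /\ t < G x).
Proof.
intros Hdecr [B HB].
destruct (completeness (fun t => exists x, 0 < x /\ t = G x)) as [T [Hub Hlub]].
- exists B. intros t [x [Hx ->]]. auto.
- exists (G 1), 1. split; [lra|reflexivity].
- exists T. split.
  + intros x Hx. apply Rlt_le_trans with (G (x / 2)); [apply Hdecr; lra|].
    apply Hub. exists (x / 2). split; [lra|reflexivity].
  + intros t Ht. apply NNPP. intros Hn.
    assert (T <= t); [|lra].
    apply Hlub. intros y [x [Hx ->]]. apply Rnot_lt_le. intros Hlt. apply Hn. eauto.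
Qed.

(* Outside the range of [G] on (0, +oo) this is an arbitrary junk value. *)
Definition decr_inv (G : R -> R) (t : R) : R :=
  epsilon (inhabits 0) (fun x => 0 < x /\ G x = t).

Section DecreasingInverse.

Variables (G : R -> R) (x0 T : R).
Hypothesis Hx0 : 0 < x0.
Hypothesis G_cont : forall x, 0 < x -> continuous G x.
Hypothesis G_decr : forall x y, 0 < x -> x < y -> G y < G x.
Hypothesis G_lt_sup : forall x, 0 < x -> G x < T.
Hypothesis G_near_sup : forall t, t < T -> exists x, 0 < x /\ t < G x.

Lemma decr_le x y : 0 < x -> x <= y -> G y <= G x.
Proof.
intros Hx Hxy. destruct (Rle_lt_or_eq_dec x y Hxy) as [Hlt|<-]; [|lra].
left. now apply G_decr.
Qed.

Lemma decr_inj x y : 0 < x -> 0 < y -> G x = G y -> x = y.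
Proof.
intros Hx Hy Hxy. destruct (Rtotal_order x y) as [H|[H|H]]; auto.
- apply G_decr in H; lra.
- apply G_decr in H; lra.
Qed.

Lemma decr_surj t : G x0 <= t < T -> exists x, 0 < x <= x0 /\ G x = t.
Proof.
intros Ht. destruct (Req_dec t (G x0)) as [->|Hne].
{ exists x0. split; [lra|reflexivity]. }
destruct (G_near_sup t (proj2 Ht)) as [x1 [Hx1 Hx1t]].
assert (Hx10 : x1 < x0).
{ apply Rnot_le_lt. intros Hle. assert (G x1 <= G x0) by (apply decr_le; lra). lra. }
destruct (Ranalysis5.IVT_interv (fun z => t - G z) x1 x0) as [x [Hx Hxt]].
- intros z Hz. apply continuity_pt_minus; [apply continuity_pt_const; intros ? ?; reflexivity|].
  apply continuity_pt_filterlim, G_cont. lra.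
- exact Hx10.
- lra.
- lra.
- exists x. split; lra.
Qed.

Lemma decr_inv_eq x : 0 < x -> decr_inv G (G x) = x.
Proof.
intros Hx.
assert (Hspec : 0 < decr_inv G (G x) /\ G (decr_inv G (G x)) = G x).
{ unfold decr_inv. apply epsilon_spec. eauto. }
apply decr_inj; tauto.
Qed.

Lemma decr_inv_spec t : G x0 <= t < T -> 0 < decr_inv G t <= x0 /\ G (decr_inv G t) = t.
Proof.
intros Ht. destruct (decr_surj t Ht) as [x [Hx <-]].
rewrite decr_inv_eq by lra. split; [exact Hx|reflexivity].
Qed.

Lemma decr_inv_lt s y : G x0 <= s < T -> 0 < y -> G y < s -> decr_inv G s < y.
Proof.
intros Hs Hy Hys. destruct (decr_inv_spec s Hs) as [Hx HGx].
apply Rnot_le_lt. intros Hle. assert (G (decr_inv G s) <= G y) by (apply decr_le; lra). lra.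
Qed.

Lemma decr_inv_gt s y : G x0 <= s < T -> 0 < y -> s < G y -> y < decr_inv G s.
Proof.
intros Hs Hy Hys. destruct (decr_inv_spec s Hs) as [Hx HGx].
apply Rnot_le_lt. intros Hle. assert (G y <= G (decr_inv G s)) by (apply decr_le; lra). lra.
Qed.

Lemma decr_inv_continuous_within t : G x0 <= t < T ->
  filterlim (decr_inv G) (within (fun s => G x0 <= s < T) (locally t))
    (locally (decr_inv G t)).
Proof.
intros Ht P [eta HP]. assert (Heta := cond_pos eta).
destruct (decr_inv_spec t Ht) as [Hx HGx].
set (x := decr_inv G t) in *.
set (x1 := Rmax (x - eta / 2) (x / 2)).
set (x2 := x + eta / 2).
assert (Hx1 : 0 < x1 /\ x1 < x /\ x - eta < x1).
{ unfold x1. assert (H1 := Rmax_l (x - eta / 2) (x / 2)).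
  assert (H2 := Rmax_r (x - eta / 2) (x / 2)).
  assert (Rmax (x - eta / 2) (x / 2) < x) by (apply Rmax_lub_lt; lra).
  lra. }
assert (HG1 : t < G x1) by (rewrite <- HGx; apply G_decr; lra).
assert (HG2 : G x2 < t) by (rewrite <- HGx; apply G_decr; unfold x2; lra).
exists (mkposreal (Rmin (G x1 - t) (t - G x2)) ltac:(apply Rmin_glb_lt; lra)).
intros s Hs HDs. apply HP.
assert (H1 := Rmin_l (G x1 - t) (t - G x2)). assert (H2 := Rmin_r (G x1 - t) (t - G x2)).
apply Rabs_lt_between' in Hs. simpl in Hs.
assert (x1 < decr_inv G s) by (apply decr_inv_gt; lra).
assert (decr_inv G s < x2) by (apply decr_inv_lt; unfold x2 in *; lra).
change (Rabs (decr_inv G s - x) < eta). apply Rabs_lt_between'. unfold x2 in *. lra.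
Qed.

Lemma decr_inv_at_left_sup : filterlim (decr_inv G) (at_left T) (at_right 0).
Proof.
intros P [eta HP].
set (e := Rmin eta x0).
assert (He : 0 < e <= x0 /\ e <= eta).
{ unfold e. repeat split; [apply Rmin_glb_lt; [apply cond_pos|lra]|apply Rmin_r|apply Rmin_l]. }
assert (HGe : G e < T) by (apply G_lt_sup; lra).
assert (HGe0 : G x0 <= G e) by (apply decr_le; lra).
exists (mkposreal (T - G e) ltac:(lra)). intros s Hs HsT. simpl in Hs.
apply Rabs_lt_between' in Hs.
assert (Hs' : G x0 <= s < T) by lra.
destruct (decr_inv_spec s Hs') as [Hpos _].
apply HP; [|lra]. change (Rabs (decr_inv G s - 0) < eta).
rewrite Rminus_0_r, Rabs_pos_eq by lra.
assert (decr_inv G s < e) by (apply decr_inv_lt; lra). lra.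
Qed.

End DecreasingInverse.

Section TravelTime.

Variables (ms rhof v0 estar : R) (E : R -> R).
Hypothesis Hms : 0 < ms.
Hypothesis Hrho : 0 < rhof.
Hypothesis Hv0 : v0 < 0.
Hypothesis Hestar : 0 < estar.
Hypothesis HEpos : forall x, 0 < x <= estar -> 0 <= E x.
Hypothesis HEcont : forall x, 0 < x <= estar ->
  filterlim E (within (fun y => 0 < y <= estar) (locally x)) (locally (E x)).

Definition total_mass (x : R) : R := ms + added_mass rhof E x.

Lemma total_mass_pos x : 0 < x <= estar -> 0 < total_mass x.
Proof.
intros Hx. unfold total_mass, added_mass. assert (0 <= E x) by auto. nra.
Qed.

Lemma Rmin_estar_range y : 0 < y -> 0 < Rmin y estar <= estar.
Proof. intros Hy. split; [apply Rmin_glb_lt; lra|apply Rmin_r]. Qed.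

(* [slowness y] is [1 / |eps'|] at position [y], clamped to [y <= estar]
   so that it is defined and continuous on all of (0, +oo). *)
Definition slowness (y : R) : R :=
  sqrt (total_mass (Rmin y estar) / total_mass estar) / - v0.

Lemma slowness_pos y : 0 < y -> 0 < slowness y.
Proof.
intros Hy. assert (H1 := total_mass_pos _ (Rmin_estar_range y Hy)).
assert (H2 : 0 < total_mass estar) by (apply total_mass_pos; lra).
apply Rdiv_lt_0_compat; [|lra]. apply sqrt_lt_R0, Rdiv_lt_0_compat; lra.
Qed.

Lemma slowness_continuous y : 0 < y -> continuous slowness y.
Proof.
intros Hy.
apply (continuous_comp (fun z => E (Rmin z estar))
  (fun u => sqrt ((ms + rhof * u) / total_mass estar) / - v0)).
- apply (filterlim_comp _ _ _ (fun z => Rmin z estar) E _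
    (within (fun u => 0 < u <= estar) (locally (Rmin y estar))));
    [|apply HEcont, Rmin_estar_range, Hy].
  intros P HP. unfold within in HP.
  assert (HPy := continuous_Rmin_l estar y _ HP). unfold filtermap in HPy.
  generalize (filter_and _ _ HPy (open_gt 0 y Hy)).
  unfold filtermap. apply filter_imp. intros z [HPz Hz]. apply HPz, Rmin_estar_range, Hz.
- apply (continuous_comp (fun u => sqrt ((ms + rhof * u) / total_mass estar)) (fun w => w / - v0)).
  + apply (continuous_comp (fun u => (ms + rhof * u) / total_mass estar) sqrt);
      [|apply continuous_sqrt].
    apply (@ex_derive_continuous R_AbsRing R_NormedModule). now auto_derive.
  + apply (@ex_derive_continuous R_AbsRing R_NormedModule). auto_derive. lra.
Qed.

Lemma ode_rhs_slowness x : 0 < x <= estar -> ode_rhs ms rhof v0 estar E x = / - slowness x.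
Proof.
intros Hx. unfold ode_rhs, slowness. rewrite Rmin_left by lra. fold (total_mass x) (total_mass estar).
assert (Hm := total_mass_pos x Hx).
assert (Hm' : 0 < total_mass estar) by (apply total_mass_pos; lra).
replace (total_mass estar / total_mass x) with (/ (total_mass x / total_mass estar)) by (field; lra).
rewrite sqrt_inv.
assert (0 < sqrt (total_mass x / total_mass estar)) by (apply sqrt_lt_R0, Rdiv_lt_0_compat; lra).
field. lra.
Qed.

Definition travel_time (x : R) : R := RInt slowness x estar.

Lemma ex_RInt_slowness a b : 0 < a -> 0 < b -> ex_RInt slowness a b.
Proof.
intros Ha Hb. apply (@ex_RInt_continuous R_CompleteNormedModule). intros z Hz.
apply slowness_continuous.
assert (0 < Rmin a b) by (apply Rmin_glb_lt; auto). lra.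
Qed.

Lemma travel_time_estar : travel_time estar = 0.
Proof. exact (@RInt_point R_CompleteNormedModule estar _). Qed.

Lemma travel_time_derive x : 0 < x -> is_derive travel_time x (- slowness x).
Proof.
intros Hx. apply (is_derive_RInt' slowness travel_time x estar).
- generalize (open_gt 0 x Hx). apply filter_imp. intros a Ha.
  apply (@RInt_correct R_CompleteNormedModule), ex_RInt_slowness; auto.
- now apply slowness_continuous.
Qed.

Lemma travel_time_continuous x : 0 < x -> continuous travel_time x.
Proof.
intros Hx. apply (@ex_derive_continuous R_AbsRing R_NormedModule).
eexists. now apply travel_time_derive.
Qed.

Lemma travel_time_decreasing x y : 0 < x -> x < y -> travel_time y < travel_time x.
Proof.
intros Hx Hxy.
destruct (MVT_gen travel_time x y (fun z => - slowness z)) as [c [Hc Hcxy]].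
- rewrite Rmin_left, Rmax_right by lra. intros z Hz. apply travel_time_derive. lra.
- rewrite Rmin_left, Rmax_right by lra. intros z Hz.
  apply continuity_pt_filterlim, travel_time_continuous. lra.
- rewrite Rmin_left, Rmax_right in Hc by lra.
  assert (0 < slowness c) by (apply slowness_pos; lra). nra.
Qed.

Lemma slowness_le_Rpower (beta C delta y : R) :
  (forall x, 0 < x < delta -> Rabs (E x) <= C * Rpower x (- beta)) ->
  0 < y -> y < delta -> y < 1 -> y <= estar ->
  slowness y <= sqrt ((ms + rhof * Rmax C 0) / total_mass estar) / - v0
                * Rpower y (- (Rmax beta 0 / 2)).
Proof.
intros HE Hy Hyd Hy1 Hye.
set (g := Rmax beta 0 / 2).
assert (Hinv : forall a, Rpower y (- a) = Rpower (/ y) a).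
{ intros a. unfold Rpower. rewrite ln_Rinv by lra. f_equal. ring. }
assert (Hy1' : 1 <= / y) by (rewrite <- Rinv_1; apply Rinv_le_contravar; lra).
set (w := Rpower (/ y) g).
assert (Hw1 : 1 <= w).
{ rewrite <- (Rpower_O (/ y)) by lra. apply Rle_Rpower; [lra|].
  unfold g. assert (H := Rmax_r beta 0). lra. }
assert (HEy : E y <= Rmax C 0 * (w * w)).
{ assert (Hbeta : Rpower (/ y) beta <= w * w).
  { unfold w. rewrite <- Rpower_plus. apply Rle_Rpower; [lra|].
    unfold g. assert (H := Rmax_l beta 0). lra. }
  assert (H := HE y (conj Hy Hyd)). rewrite Hinv in H.
  assert (0 < Rpower (/ y) beta) by apply exp_pos.
  assert (HC := Rmax_l C 0). assert (HC0 := Rmax_r C 0).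
  apply Rle_trans with (C * Rpower (/ y) beta); [eapply Rle_trans; [apply Rle_abs|exact H]|].
  apply Rle_trans with (Rmax C 0 * Rpower (/ y) beta); [nra|].
  apply Rmult_le_compat_l; lra. }
assert (HM : 0 < total_mass estar) by (apply total_mass_pos; lra).
assert (Hmy : total_mass y <= (ms + rhof * Rmax C 0) * (w * w)).
{ unfold total_mass, added_mass.
  assert (ms <= ms * (w * w)).
  { assert (1 <= w * w) by nra. rewrite <- (Rmult_1_r ms) at 1. apply Rmult_le_compat_l; lra. }
  assert (rhof * E y <= rhof * (Rmax C 0 * (w * w))) by (apply Rmult_le_compat_l; lra).
  lra. }
unfold slowness. rewrite Rmin_left, Hinv by lra. fold g w.
replace (sqrt ((ms + rhof * Rmax C 0) / total_mass estar) / - v0 * w)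
  with (sqrt ((ms + rhof * Rmax C 0) / total_mass estar * (w * w)) / - v0).
- unfold Rdiv at 1 3. apply Rmult_le_compat_r; [apply Rlt_le, Rinv_0_lt_compat; lra|].
  apply sqrt_le_1_alt. unfold Rdiv.
  rewrite (Rmult_comm (ms + _)), Rmult_assoc. rewrite (Rmult_comm (/ _)).
  apply Rmult_le_compat_r; [apply Rlt_le, Rinv_0_lt_compat; lra|exact Hmy].
- assert (0 <= (ms + rhof * Rmax C 0) / total_mass estar).
  { assert (HC0 := Rmax_r C 0). apply Rlt_le, Rdiv_lt_0_compat; nra. }
  rewrite sqrt_mult, sqrt_square by nra. field. lra.
Qed.

Lemma travel_time_bounded (beta C delta : R) : beta < 2 -> 0 < delta ->
  (forall x, 0 < x < delta -> Rabs (E x) <= C * Rpower x (- beta)) ->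
  exists B, forall x, 0 < x -> travel_time x <= B.
Proof.
intros Hbeta Hdelta HE.
set (d := Rmin (Rmin delta estar) 1).
assert (Hd : 0 < d /\ d <= delta /\ d <= estar /\ d <= 1).
{ unfold d. assert (H1 := Rmin_l (Rmin delta estar) 1). assert (H2 := Rmin_r (Rmin delta estar) 1).
  assert (H3 := Rmin_l delta estar). assert (H4 := Rmin_r delta estar).
  repeat split; try lra. repeat apply Rmin_glb_lt; lra. }
set (g := Rmax beta 0 / 2).
assert (Hg : 0 <= g < 1).
{ unfold g. assert (H := Rmax_r beta 0). assert (Rmax beta 0 < 2) by (apply Rmax_lub_lt; lra). lra. }
set (k := sqrt ((ms + rhof * Rmax C 0) / total_mass estar) / - v0).
assert (Hk : 0 <= k) by (apply Rmult_le_pos; [apply sqrt_pos|apply Rlt_le, Rinv_0_lt_compat; lra]).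
assert (HP : 0 <= / (1 - g) * Rpower d (1 - g)).
{ apply Rmult_le_pos; [apply Rlt_le, Rinv_0_lt_compat; lra|apply Rlt_le, exp_pos]. }
exists (k * (/ (1 - g) * Rpower d (1 - g)) + travel_time d). intros x Hx.
destruct (Rlt_or_le x d) as [Hxd|Hxd].
- assert (Hsplit : travel_time x = RInt slowness x d + travel_time d).
  { unfold travel_time. rewrite <- (RInt_Chasles _ x d estar) by (apply ex_RInt_slowness; lra).
    reflexivity. }
  assert (Hex : ex_RInt (fun y => Rpower y (- g)) x d).
  { apply (@ex_RInt_continuous R_CompleteNormedModule). intros z Hz.
    rewrite Rmin_left in Hz by lra. apply continuous_Rpower_l. lra. }
  assert (Hle : RInt slowness x d <= RInt (fun y => k * Rpower y (- g)) x d).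
  { apply RInt_le; [lra|apply ex_RInt_slowness; lra|apply (ex_RInt_scal _ _ _ k Hex)|].
    intros y Hy. apply (slowness_le_Rpower beta C delta); auto; lra. }
  assert (Hscal : RInt (fun y => k * Rpower y (- g)) x d = k * RInt (fun y => Rpower y (- g)) x d)
    by exact (RInt_scal _ x d k Hex).
  assert (Hpow := RInt_Rpower_le g x d Hg ltac:(lra)).
  assert (k * RInt (fun y => Rpower y (- g)) x d <= k * (/ (1 - g) * Rpower d (1 - g)))
    by (apply Rmult_le_compat_l; auto).
  lra.
- assert (travel_time x <= travel_time d).
  { destruct (Rle_lt_or_eq_dec d x Hxd) as [Hlt|<-]; [|lra].
    left. apply travel_time_decreasing; lra. }
  assert (0 <= k * (/ (1 - g) * Rpower d (1 - g))) by (apply Rmult_le_pos; auto).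
  lra.
Qed.

Lemma ode_rhs_vanishes :
  filterlim E (at_right 0) (Rbar_locally p_infty) ->
  filterlim (ode_rhs ms rhof v0 estar E) (at_right 0) (locally 0).
Proof.
intros HEinf.
assert (Hmass : filterlim total_mass (at_right 0) (Rbar_locally p_infty)).
{ intros P [M HP].
  assert (HE : filtermap E (at_right 0) (fun y => (M - ms) / rhof < y))
    by (apply HEinf; now exists ((M - ms) / rhof)).
  unfold filtermap in HE |- *. revert HE. apply filter_imp. intros x Hx. apply HP. unfold total_mass, added_mass.
  apply (Rmult_lt_compat_l rhof) in Hx; [|lra].
  replace (rhof * ((M - ms) / rhof)) with (M - ms) in Hx by (field; lra). lra. }
change (filterlim (fun x => (fun w => v0 * sqrt (total_mass estar * w)) (/ total_mass x))
  (at_right 0) (locally 0)).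
apply (filterlim_comp _ _ _ (fun x => / total_mass x) _ _ (locally 0)).
- exact (filterlim_comp _ _ _ total_mass Rinv _ _ _ Hmass (filterlim_Rbar_inv p_infty ltac:(discriminate))).
- replace 0 with (v0 * sqrt (total_mass estar * 0)) at 2 by (rewrite Rmult_0_r, sqrt_0; ring).
  apply (continuous_comp (fun w => sqrt (total_mass estar * w)) (fun z => v0 * z)).
  + apply (continuous_comp (fun w => total_mass estar * w) sqrt); [|apply continuous_sqrt].
    apply (@ex_derive_continuous R_AbsRing R_NormedModule). now auto_derive.
  + apply (@ex_derive_continuous R_AbsRing R_NormedModule). now auto_derive.
Qed.

(* [travel_time (eps t) - t] has zero derivative and vanishes at [t = 0+]. *)
Lemma solution_travel_time (eps : R -> R) (T : R) :
  is_solution ms rhof v0 estar E eps T -> forall t, 0 <= t < T -> travel_time (eps t) = t.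
Proof.
intros [HT [Heps0 [Hrange [Hlim Hder]]]] t Ht.
destruct (Rle_lt_or_eq_dec 0 t (proj1 Ht)) as [Ht0|<-]; [|rewrite Heps0; apply travel_time_estar].
enough (Hconst : plus (travel_time (eps t)) (opp t) = 0)
  by (change (travel_time (eps t) + - t = 0) in Hconst; lra).
apply (is_derive_0_at_right_lim (fun r => plus (travel_time (eps r)) (opp r)) 0 T); [| |lra].
- intros r Hr. destruct (Hrange r ltac:(lra)) as [Hpos Hle].
  assert (Hc := is_derive_comp travel_time eps r _ _ (travel_time_derive _ Hpos) (Hder r Hr)).
  rewrite ode_rhs_slowness in Hc by lra.
  assert (Hs := slowness_pos _ Hpos).
  apply is_derive_Reals in Hc. apply is_derive_Reals.
  change (derivable_pt_lim (fun r => travel_time (eps r) - id r) r 0).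
  replace 0 with (/ - slowness (eps r) * - slowness (eps r) - 1) by (field; lra).
  apply derivable_pt_lim_minus; [exact Hc|apply derivable_pt_lim_id].
- assert (Hl : filterlim (fun r => plus (travel_time (eps r)) (opp r)) (at_right 0)
                 (locally (plus (travel_time estar) (opp 0)))).
  { apply (filterlim_comp_2 (G := locally (travel_time estar)) (H := locally (opp 0))
      (fun r => travel_time (eps r)) (fun r => opp r) plus);
      [| |exact (@filterlim_plus R_AbsRing R_NormedModule _ _)].
    - apply (filterlim_comp _ _ _ eps travel_time _ _ _ Hlim), travel_time_continuous, Hestar.
    - apply (filterlim_comp _ _ _ (fun r => r) opp _ (locally 0)); [|exact (@filterlim_opp R_AbsRing R_NormedModule 0)].
      exact (filterlim_filter_le_2 _ (filter_le_within (F := locally 0) (fun u => 0 < u))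
        (filterlim_id _ (at_right 0))). }
  rewrite travel_time_estar in Hl. change (plus 0 (opp 0)) with (0 + - 0) in Hl.
  now rewrite Ropp_0, Rplus_0_r in Hl.
Qed.

Lemma travel_time_inverse_solution (T : R) :
  (forall x, 0 < x -> travel_time x < T) ->
  (forall t, t < T -> exists x, 0 < x /\ t < travel_time x) ->
  is_solution ms rhof v0 estar E (decr_inv travel_time) T.
Proof.
intros Hsup Hnear.
set (F := decr_inv travel_time).
assert (Hcont := travel_time_continuous). assert (Hdecr := travel_time_decreasing).
assert (Hspec : forall t, 0 <= t < T -> 0 < F t <= estar /\ travel_time (F t) = t).
{ intros t Ht. apply (decr_inv_spec travel_time estar T); auto. now rewrite travel_time_estar. }
assert (HT : 0 < T) by (rewrite <- travel_time_estar; auto).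
assert (HF0 : F 0 = estar).
{ unfold F. rewrite <- travel_time_estar. now apply decr_inv_eq. }
assert (Hwithin : forall t, 0 <= t < T ->
  filterlim F (within (fun s => 0 <= s < T) (locally t)) (locally (F t))).
{ intros t Ht.
  replace (fun s => 0 <= s < T) with (fun s => travel_time estar <= s < T)
    by now rewrite travel_time_estar.
  apply (decr_inv_continuous_within travel_time estar T); auto. now rewrite travel_time_estar. }
split; [exact HT|split; [exact HF0|split; [|split]]].
- intros t Ht. apply Hspec, Ht.
- assert (Hloc : locally 0 (fun s => 0 < s -> 0 <= s < T)).
  { apply (locally_interval _ 0 m_infty T); [exact I|exact HT|]. simpl. intros s _ HsT Hs. lra. }
  rewrite <- HF0.
  exact (filterlim_filter_le_1 _ (filter_le_within_within 0 _ _ Hloc) (Hwithin 0 ltac:(lra))).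
- intros t Ht. destruct (Hspec t ltac:(lra)) as [Hpos HGt].
  assert (Hs := slowness_pos _ (proj1 Hpos)).
  rewrite ode_rhs_slowness by exact Hpos.
  apply (is_derive_inverse travel_time).
  + lra.
  + apply travel_time_derive, Hpos.
  + apply (locally_interval _ t 0 T); try (simpl; lra). intros s Hs0 HsT. apply Hspec. simpl in *. lra.
  + assert (Hloc : locally t (fun s => 0 <= s < T)).
    { apply (locally_interval _ t 0 T); try (simpl; lra). simpl. intros s Hs0 HsT. lra. }
    exact (filterlim_filter_le_1 _ (filter_le_locally_within t _ Hloc) (Hwithin t ltac:(lra))).
Qed.

Lemma solution_maximal (T : R) :
  (forall x, 0 < x -> travel_time x < T) ->
  forall (eps : R -> R) (T2 : R), is_solution ms rhof v0 estar E eps T2 ->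
  T2 <= T /\ forall t, 0 <= t < T2 -> eps t = decr_inv travel_time t.
Proof.
intros Hsup eps T2 Hsol.
assert (HT : 0 < T) by (rewrite <- travel_time_estar; auto).
assert (Htt := solution_travel_time eps T2 Hsol).
destruct Hsol as [HT2 [_ [Hrange _]]].
assert (HT2T : T2 <= T).
{ apply Rnot_lt_le. intros HTT2. destruct (Hrange T ltac:(lra)) as [Hpos _].
  specialize (Hsup _ Hpos). rewrite Htt in Hsup by lra. lra. }
split; [exact HT2T|]. intros t Ht.
rewrite <- (decr_inv_eq travel_time travel_time_decreasing (eps t)) by apply Hrange, Ht.
now rewrite Htt.
Qed.

Lemma solution_velocity_vanishes (eps : R -> R) (T : R) :
  filterlim E (at_right 0) (Rbar_locally p_infty) ->
  is_solution ms rhof v0 estar E eps T -> filterlim eps (at_left T) (at_right 0) ->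
  filterlim (fun t => Derive eps t) (at_left T) (locally 0).
Proof.
intros HEinf [HT [_ [_ [_ Hder]]]] Hlim.
apply (filterlim_ext_loc (fun t => ode_rhs ms rhof v0 estar E (eps t))).
- exists (mkposreal T HT). intros s Hs HsT. simpl in Hs. apply Rabs_lt_between' in Hs.
  symmetry. apply is_derive_unique, Hder. lra.
- exact (filterlim_comp _ _ _ eps _ _ _ _ Hlim (ode_rhs_vanishes HEinf)).
Qed.

End TravelTime.

Theorem lemma1p3
  (ms rhof v0 estar : R) (E : R -> R)
  (Hms : 0 < ms) (Hrho : 0 < rhof) (Hv0 : v0 < 0) (Hestar : 0 < estar)
  (HEpos : forall x, 0 < x <= estar -> 0 <= E x)
  (HEcont : forall x, 0 < x <= estar ->
     filterlim E (within (fun y => 0 < y <= estar) (locally x)) (locally (E x)))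
  (HEinf : filterlim E (at_right 0) (Rbar_locally p_infty))
  (HEbig : exists beta, beta < 2 /\ exists C delta, 0 < delta /\
     forall x, 0 < x < delta -> Rabs (E x) <= C * Rpower x (- beta)) :
  exists (T : R) (eps : R -> R),
    is_solution ms rhof v0 estar E eps T /\
    (* maximality / uniqueness: every solution lives inside [0,T) and agrees *)
    (forall (eps2 : R -> R) (T2 : R), is_solution ms rhof v0 estar E eps2 T2 ->
        T2 <= T /\ forall t, 0 <= t < T2 -> eps2 t = eps t) /\
    filterlim eps (at_left T) (locally 0) /\
    filterlim (fun t => Derive eps t) (at_left T) (locally 0).
Proof.
destruct HEbig as [beta [Hbeta [C [delta [Hdelta HE]]]]].
set (G := travel_time ms rhof v0 estar E).
assert (Hcont := travel_time_continuous ms rhof v0 estar E Hestar HEcont).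
assert (Hdecr := travel_time_decreasing ms rhof v0 estar E Hms Hrho Hv0 Hestar HEpos HEcont).
destruct (decreasing_strict_sup G Hdecr
  (travel_time_bounded ms rhof v0 estar E Hms Hrho Hv0 Hestar HEpos HEcont beta C delta
     Hbeta Hdelta HE)) as [T [Hsup Hnear]].
assert (Hsol := travel_time_inverse_solution ms rhof v0 estar E Hms Hrho Hv0 Hestar HEpos HEcont
  T Hsup Hnear).
assert (Hvanish := decr_inv_at_left_sup G estar T Hestar Hcont Hdecr Hsup Hnear).
exists T, (decr_inv G). split; [exact Hsol|split; [|split]].
- exact (solution_maximal ms rhof v0 estar E Hms Hrho Hv0 Hestar HEpos HEcont T Hsup).
- exact (filterlim_filter_le_2 _ (filter_le_within (F := locally 0) _) Hvanish).
- exact (solution_velocity_vanishes ms rhof v0 estar E Hrho _ _ HEinf Hsol Hvanish).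
Qed.
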